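(* For every integer $n\ge1$ and all $u,x,y,z\in\mathbb{C}((t^{1/n}))$ satisfying $x^2-tu^2+t=(u^2t^2-t)y^2\neq0$ and $x^2-2tu^2+t^{-1}=t(u^2t^2-t)z^2\neq0$, the element $u^2t^2-t$ is a square in $\mathbb{C}((t^{1/n}))$. *)

(* Formal Laurent series C((s)) over a ring C, where
   C((t^{1/n})) is realized as C((s)) with s = t^{1/n}, i.e. t = s^n. *)
From HB Require Import structures.
From mathcomp Require Import all_boot all_order all_algebra.
From mathcomp Require Export reals complex.
Set Implicit Arguments. Unset Strict Implicit. Unset Printing Implicit Defensive.
Import Order.TTheory GRing.Theory Num.Theory.
Local Open Scope ring_scope.

Section Laurent.
Variable C : nzRingType.

Record laurent := Laurent {
  lcoef : int -> C ;
  lval : int ;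
  lcoefP : forall m : int, m < lval -> lcoef m = 0 }.

Definition leq_ser (a b : laurent) : Prop := forall m, lcoef a m = lcoef b m.
Definition lnonzero (a : laurent) : Prop := exists m, lcoef a m != 0.

Lemma ladd_proof (a b : laurent) : forall m : int,
  m < Order.min (lval a) (lval b) -> lcoef a m + lcoef b m = 0.
Proof.
move=> m; rewrite lt_min => /andP[ha hb].
by rewrite (lcoefP ha) (lcoefP hb) addr0.
Qed.
Definition ladd (a b : laurent) : laurent :=
  @Laurent (fun m => lcoef a m + lcoef b m) (Order.min (lval a) (lval b)) (@ladd_proof a b).

Lemma lopp_proof (a : laurent) : forall m : int, m < lval a -> - lcoef a m = 0.
Proof. by move=> m h; rewrite (lcoefP h) oppr0. Qed.
Definition lopp (a : laurent) : laurent :=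
  @Laurent (fun m => - lcoef a m) (lval a) (@lopp_proof a).

Definition lsub a b := ladd a (lopp b).

(* Cauchy product: coefficient m is sum over i + j = m with i >= lval a, j >= lval b *)
Definition lmul_coef (a b : laurent) (m : int) : C := if m < lval a + lval b then 0 else
     \sum_(i < (absz (m - lval a - lval b)%R).+1)
        lcoef a (lval a + i%:Z) * lcoef b (m - lval a - i%:Z).
Lemma lmul_proof (a b : laurent) : forall m : int,
  m < lval a + lval b -> lmul_coef a b m = 0.
Proof. by move=> m h; rewrite /lmul_coef h. Qed.
Definition lmul (a b : laurent) : laurent :=
  @Laurent (lmul_coef a b) (lval a + lval b) (@lmul_proof a b).

Lemma lmono_proof (k : int) : forall m : int, m < k -> ((m == k)%:R : C) = 0.
Proof. by move=> m h; rewrite lt_eqF. Qed.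
Definition lmono (k : int) : laurent :=
  @Laurent (fun m => (m == k)%:R) k (@lmono_proof k).

Lemma lconst_proof (c : C) : forall m : int, m < 0 -> (if m == 0 then c else 0) = 0.
Proof. by move=> m h; rewrite lt_eqF. Qed.
Definition lconst (c : C) : laurent :=
  @Laurent (fun m => if m == 0 then c else 0) 0 (@lconst_proof c).

Definition lsq a := lmul a a.

Definition lis_square (a : laurent) : Prop := exists w, leq_ser (lsq w) a.

End Laurent.

(* A Laurent series of even valuation over an algebraically closed field is a
   square: the leading coefficient has a square root and the remaining
   coefficients of the root are solved for one at a time.  It thus suffices to show that v(A) is even for A = u^2 t^2 - t.
   If 2 v(u) < -n then v(A) = 2 v(u) + 2 n.  Otherwise t u^2 and 2 t u^2 have
   nonnegative valuation, and comparing valuations in the two equations gives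
   v(A) = 2 v(x) - 2 v(y) when 2 v(x) <= -n, and v(A) = -2 n - 2 v(z) when
   2 v(x) > -n. *)
From HB Require Import structures.
From mathcomp Require Import all_boot all_order all_algebra.
From mathcomp Require Import reals complex zify ring.
From Stdlib Require Import Classical_Prop.
Import Order.TTheory GRing.Theory Num.Theory.
Local Open Scope ring_scope.
Set Implicit Arguments. Unset Strict Implicit.

Section Valuation.
Variable C : nzRingType.
Implicit Types (a b : laurent C) (p q : int).

Definition lzero_below a p := forall m, m < p -> lcoef a m = 0.
Definition lvaluation a p := lzero_below a p /\ lcoef a p != 0.

Lemma lzero_below_lval a : lzero_below a (lval a).
Proof. exact: lcoefP. Qed.

Lemma lzero_below_le a p q : q <= p -> lzero_below a p -> lzero_below a q.
Proof. by move=> hqp ha m hm; apply: ha; apply: lt_le_trans hm hqp. Qed.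

Lemma lzero_below_add a b p :
  lzero_below a p -> lzero_below b p -> lzero_below (ladd a b) p.
Proof. by move=> ha hb m hm /=; rewrite ha ?hb ?addr0. Qed.

Lemma lzero_below_sub a b p :
  lzero_below a p -> lzero_below b p -> lzero_below (lsub a b) p.
Proof. by move=> ha hb m hm /=; rewrite ha ?hb ?subr0. Qed.

Lemma lvaluation_addr a b p :
  lvaluation a p -> lzero_below b (p + 1) -> lvaluation (ladd a b) p.
Proof.
move=> [ha na] hb; split; last by rewrite /= hb ?addr0 ?ltrDl.
by apply: lzero_below_add => //; apply: lzero_below_le hb; rewrite lerDl.
Qed.

Lemma lvaluation_addl a b p :
  lzero_below a (p + 1) -> lvaluation b p -> lvaluation (ladd a b) p.
Proof.
move=> ha [hb nb]; split; last by rewrite /= ha ?add0r ?ltrDl.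
by apply: lzero_below_add => //; apply: lzero_below_le ha; rewrite lerDl.
Qed.

Lemma lvaluation_subr a b p :
  lvaluation a p -> lzero_below b (p + 1) -> lvaluation (lsub a b) p.
Proof.
move=> va hb; apply: lvaluation_addr va _ => m hm /=.
by rewrite hb ?oppr0.
Qed.

Lemma lvaluation_lmono k : lvaluation (lmono C k) k.
Proof. by split; [exact: lzero_below_lval | rewrite /= eqxx oner_eq0]. Qed.

Lemma lvaluation_uniq a p q : lvaluation a p -> lvaluation a q -> p = q.
Proof.
move=> [hp np] [hq nq]; case: (ltgtP p q) => // h.
  by rewrite (hq _ h) eqxx in np.
by rewrite (hp _ h) eqxx in nq.
Qed.

Lemma leq_ser_lvaluation a b p : leq_ser a b -> lvaluation a p -> lvaluation b p.
Proof. by move=> eab [ha na]; split=> [m hm|]; rewrite -eab // ha. Qed.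

Lemma lnonzero_lvaluation a : lnonzero a -> exists p, lvaluation a p.
Proof.
case=> m0 hm0.
have hge : lval a <= m0.
  by rewrite leNgt; apply: contra hm0 => /lcoefP ->.
have ex : exists j : nat, lcoef a (lval a + j%:Z) != 0.
  by exists (absz (m0 - lval a)); have -> : lval a + (absz (m0 - lval a))%:Z = m0 by lia.
case: (ex_minnP ex) => j hj hmin; exists (lval a + j%:Z); split => // m hm.
case: (ltP m (lval a)) => h; first exact: lcoefP.
apply/eqP; apply: contraT => hne.
have := hmin (absz (m - lval a)); have -> : lval a + (absz (m - lval a))%:Z = m by lia.
by move=> /(_ hne); lia.
Qed.

Lemma lzero_or_lnonzero a : (forall m, lcoef a m = 0) \/ lnonzero a.
Proof.
case: (classic (lnonzero a)) => h; [by right | left => m].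
by apply/eqP; apply: contraT => hm; case: h; exists m.
Qed.

Lemma lcoef_mul0l a b m : (forall i, lcoef a i = 0) -> lcoef (lmul a b) m = 0.
Proof.
move=> a0; rewrite /= /lmul_coef; case: ifP => // _.
by apply: big1 => i _; rewrite a0 mul0r.
Qed.

Lemma lcoef_mul0r a b m : (forall i, lcoef b i = 0) -> lcoef (lmul a b) m = 0.
Proof.
move=> b0; rewrite /= /lmul_coef; case: ifP => // _.
by apply: big1 => i _; rewrite b0 mulr0.
Qed.

Lemma lnonzero_mull a b : lnonzero (lmul a b) -> lnonzero a.
Proof.
case=> m hm; case: (lzero_or_lnonzero a) => // a0.
by rewrite lcoef_mul0l ?eqxx in hm.
Qed.

Lemma lnonzero_mulr a b : lnonzero (lmul a b) -> lnonzero b.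
Proof.
case=> m hm; case: (lzero_or_lnonzero b) => // b0.
by rewrite lcoef_mul0r ?eqxx in hm.
Qed.

Lemma lcoef_mul_term_eq0 a b p q j m : lzero_below a p -> lzero_below b q ->
  (j < p) || (m - j < q) -> lcoef a j * lcoef b (m - j) = 0.
Proof. by move=> ha hb /orP[/ha -> | /hb ->]; rewrite ?mul0r ?mulr0. Qed.

Lemma lzero_below_mul a b p q :
  lzero_below a p -> lzero_below b q -> lzero_below (lmul a b) (p + q).
Proof.
move=> ha hb m hm; rewrite /= /lmul_coef; case: ifP => // _.
apply: big1 => i _; rewrite (_ : m - lval a - i%:Z = m - (lval a + i%:Z)); last by lia.
by apply: (lcoef_mul_term_eq0 ha hb); lia.
Qed.

Lemma lcoef_mul_lead a b p q : lzero_below a p -> lzero_below b q ->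
  lcoef (lmul a b) (p + q) = lcoef a p * lcoef b q.
Proof.
move=> ha hb; case: (ltP p (lval a)) => [hpa|hpa].
  by rewrite (lcoefP hpa) mul0r (lzero_below_mul (lzero_below_lval (a := a)) hb) // ltrD2r.
case: (ltP q (lval b)) => [hqb|hqb].
  by rewrite (lcoefP hqb) mulr0 (lzero_below_mul ha (lzero_below_lval (a := b))) // ltrD2l.
rewrite /= /lmul_coef ifF; last by apply/negbTE; rewrite -leNgt; lia.
have hi0 : (absz (p - lval a)%R < (absz (p + q - lval a - lval b)%R).+1)%N by lia.
rewrite (bigD1 (Ordinal hi0)) //= big1 ?addr0; first by congr (lcoef a _ * lcoef b _); lia.
move=> i /eqP hi; rewrite (_ : p + q - lval a - i%:Z = p + q - (lval a + i%:Z)); last by lia.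
apply: (lcoef_mul_term_eq0 ha hb); case: (ltgtP (lval a + i%:Z) p) => h; rewrite ?h //.
- by apply/orP; right; lia.
- by case: hi; apply: val_inj => /=; lia.
Qed.

End Valuation.

Section IntegralDomain.
Variable C : idomainType.
Implicit Types (a b : laurent C) (p q : int).

Lemma lvaluation_mul a b p q :
  lvaluation a p -> lvaluation b q -> lvaluation (lmul a b) (p + q).
Proof.
move=> [ha na] [hb nb]; split; first exact: lzero_below_mul.
by rewrite lcoef_mul_lead // mulf_neq0.
Qed.

Lemma lvaluation_sq a p : lvaluation a p -> lvaluation (lsq a) (p + p).
Proof. by move=> va; apply: lvaluation_mul. Qed.

Lemma lsq_zero_below_or_lvaluation a p :
  lzero_below (lsq a) p \/ exists2 q, q + q < p & lvaluation a q.
Proof.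
case: (lzero_or_lnonzero a) => [a0|/lnonzero_lvaluation [q va]].
  by left => m _; apply: lcoef_mul0l.
case: (ltP (q + q) p) => hq; first by right; exists q.
by left; apply: lzero_below_le hq (lvaluation_sq va).1.
Qed.

End IntegralDomain.

Section SquareRoot.
Variable C : numClosedFieldType.
Variables (a : laurent C) (k : int).
Hypothesis va : lvaluation a (k + k).

Let c (j : nat) := lcoef a (k + k + j%:Z).
Let r := sqrtC (c 0).

(* The j-th prefix [w_0; ...; w_j] of the square root of a * s^(-2k): w_0 = r
   and the coefficient of index J+1 of w^2 is 2 r w_(J+1) + sum_(i<J) w_(i+1) w_(J-i). *)
Fixpoint sqrt_prefix (j : nat) : seq C :=
  if j is J.+1 then
    let s := sqrt_prefix J in
    rcons s ((c J.+1 - \sum_(i < J) s`_i.+1 * s`_(J - i)) / (2 * r))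
  else [:: r].

Let w j := (sqrt_prefix j)`_j.

Lemma size_sqrt_prefix j : size (sqrt_prefix j) = j.+1.
Proof. by elim: j => //= j IH; rewrite size_rcons IH. Qed.

Lemma nth_sqrt_prefix i j : (i <= j)%N -> (sqrt_prefix j)`_i = w i.
Proof.
elim: j => [|j IH]; first by rewrite leqn0 => /eqP ->.
rewrite leq_eqVlt => /orP[/eqP -> //|hi].
by rewrite /= nth_rcons size_sqrt_prefix hi IH.
Qed.

Lemma sqrt_root_neq0 : r != 0.
Proof. by rewrite /r sqrtC_eq0 /c addr0; case: va. Qed.

Lemma sqrt_prefix_conv j : \sum_(i < j.+1) w i * w (j - i)%N = c j.
Proof.
case: j => [|J]; first by rewrite big_ord1 /w /= -expr2 sqrtCK.
rewrite big_ord_recl big_ord_recr /= subn0 subnn.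
rewrite (eq_bigr (fun i : 'I_J => (sqrt_prefix J)`_i.+1 * (sqrt_prefix J)`_(J - i))); last first.
  move=> i _; rewrite /bump /= add1n subSS.
  by rewrite !nth_sqrt_prefix // ?leq_subr.
rewrite /w /= nth_rcons size_sqrt_prefix ltnn eqxx.
by field; exact: sqrt_root_neq0.
Qed.

Lemma sqrt_series_proof m : m < k -> (if k <= m then w (absz (m - k)) else 0) = 0.
Proof. by rewrite leNgt => ->. Qed.

Definition sqrt_series :=
  @Laurent C (fun m => if k <= m then w (absz (m - k)) else 0) k sqrt_series_proof.

Lemma lis_square_even_lvaluation : lis_square a.
Proof.
exists sqrt_series => m; rewrite /= /lmul_coef /=.
case: ifP => hm; first by rewrite va.1.
rewrite (_ : lcoef a m = c (absz (m - k - k)%R)); last by rewrite /c; congr lcoef; lia.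
rewrite -sqrt_prefix_conv; apply: eq_bigr => i _.
have hi := ltn_ord i.
by rewrite !ifT; [congr (w _ * w _) | lia | lia]; lia.
Qed.

End SquareRoot.

Section EvenValuation.
Variables (C : idomainType) (n : nat) (u x y z : laurent C).
Hypothesis n_gt0 : (1 <= n)%N.
Let t := lmono C n%:Z.
Let A := lsub (lmul (lsq u) (lsq t)) t.
Hypothesis eq_y : leq_ser (ladd (lsub (lsq x) (lmul t (lsq u))) t) (lmul A (lsq y)).
Hypothesis eq_z : leq_ser
  (ladd (lsub (lsq x) (lmul (lmul (lconst 2%:R) t) (lsq u))) (lmono C (- n%:Z)))
  (lmul t (lmul A (lsq z))).
Variables (al be ga : int).
Hypotheses (vA : lvaluation A al) (vy : lvaluation y be) (vz : lvaluation z ga).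

Lemma even_lvaluation_big_u a : lvaluation u a -> a + a < - n%:Z -> exists k, al = k + k.
Proof.
move=> vu ha; exists (a + n%:Z).
have vu2t2 := lvaluation_mul (lvaluation_sq vu) (lvaluation_sq (lvaluation_lmono C n%:Z)).
have small_t : lzero_below t (a + a + (n%:Z + n%:Z) + 1).
  by apply: lzero_below_le (lvaluation_lmono C n%:Z).1; lia.
by rewrite (lvaluation_uniq vA (lvaluation_subr vu2t2 small_t)); lia.
Qed.

Section SmallU.
Hypothesis small_u : lzero_below (lsq u) (- n%:Z).

Lemma lzero_below_tu2 : lzero_below (lmul t (lsq u)) 0.
Proof.
have := lzero_below_mul (lvaluation_lmono C n%:Z).1 small_u.
by rewrite subrr.
Qed.

Lemma lzero_below_2tu2 : lzero_below (lmul (lmul (lconst 2%:R) t) (lsq u)) 0.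
Proof.
have small_2t := lzero_below_mul (lzero_below_lval (a := lconst 2%:R)) (lvaluation_lmono C n%:Z).1.
by have := lzero_below_mul small_2t small_u; rewrite /= add0r subrr.
Qed.

Lemma even_lvaluation_small_x c : lvaluation x c -> c + c <= - n%:Z ->
  exists k, al = k + k.
Proof.
move=> vx hc; exists (c - be).
have vlhs : lvaluation (ladd (lsub (lsq x) (lmul t (lsq u))) t) (c + c).
  apply: lvaluation_addr; last by apply: lzero_below_le (lvaluation_lmono C n%:Z).1; lia.
  apply: lvaluation_subr (lvaluation_sq vx) _.
  by apply: lzero_below_le lzero_below_tu2; lia.
have := lvaluation_uniq (leq_ser_lvaluation eq_y vlhs) (lvaluation_mul vA (lvaluation_sq vy)).
by lia.
Qed.

Lemma even_lvaluation_big_x : lzero_below (lsq x) (- n%:Z + 1) -> exists k, al = k + k.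
Proof.
move=> small_x; exists (- n%:Z - ga).
have small_2tu2 : lzero_below (lmul (lmul (lconst 2%:R) t) (lsq u)) (- n%:Z + 1).
  by apply: lzero_below_le lzero_below_2tu2; lia.
have vlhs := lvaluation_addl (lzero_below_sub small_x small_2tu2) (lvaluation_lmono C (- n%:Z)).
have vrhs := lvaluation_mul (lvaluation_lmono C n%:Z) (lvaluation_mul vA (lvaluation_sq vz)).
by have := lvaluation_uniq (leq_ser_lvaluation eq_z vlhs) vrhs; lia.
Qed.

End SmallU.

Lemma even_lvaluation_A : exists k, al = k + k.
Proof.
case: (lsq_zero_below_or_lvaluation u (- n%:Z)) => [small_u|[a ha vu]].
  case: (lsq_zero_below_or_lvaluation x (- n%:Z + 1)) => [|[c hc vx]].
    exact: even_lvaluation_big_x.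
  by apply: (even_lvaluation_small_x small_u vx); lia.
exact: even_lvaluation_big_u vu ha.
Qed.

End EvenValuation.

Theorem lemma9p1 (R : realType) (n : nat) (hn : (1 <= n)%N)
  (u x y z : laurent (complex R)) :
  let t := lmono (complex R) n%:Z in
  let tinv := lmono (complex R) (- n%:Z) in
  let two := lconst 2%:R in
  let A := lsub (lmul (lsq u) (lsq t)) t in
  leq_ser (ladd (lsub (lsq x) (lmul t (lsq u))) t) (lmul A (lsq y)) ->
  lnonzero (lmul A (lsq y)) ->
  leq_ser (ladd (lsub (lsq x) (lmul (lmul two t) (lsq u))) tinv)
          (lmul t (lmul A (lsq z))) ->
  lnonzero (lmul t (lmul A (lsq z))) ->
  lis_square A.
Proof.
move=> t tinv two A eq_y nz_y eq_z nz_z.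
have [al vA] := lnonzero_lvaluation (lnonzero_mull nz_y).
have [be vy] := lnonzero_lvaluation (lnonzero_mull (lnonzero_mulr nz_y)).
have [ga vz] := lnonzero_lvaluation (lnonzero_mull (lnonzero_mulr (lnonzero_mulr nz_z))).
have [k ek] := even_lvaluation_A hn eq_y eq_z vA vy vz.
by rewrite ek in vA; exact: lis_square_even_lvaluation vA.
Qed.
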